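(* Let $p$ be prime, $d>1$ an integer, $N\ge1$, and let $P_d^N$ be the degree-$d$ powering map ($(x_1,\dots,x_N)\mapsto(x_1^d,\dots,x_N^d)$ on $\mathbb{A}^N$, $[x_0:\cdots:x_N]\mapsto[x_0^d:\cdots:x_N^d]$ on $\mathbb{P}^N$). Let $m^-$ be the largest divisor of $p-1$ relatively prime to $d$. For a positive integer $k$ let $\delta_k=1$ if $k=1$ and $\delta_k=0$ otherwise, and for a divisor $e$ of $m^-$ let $o(e)$ denote the multiplicative order of $d$ modulo $e$ (with $o(1)=1$). Then for every positive integer $k$, $$\#\mathrm{Per}_k(P_d^N,\mathbb{A}^N(\mathbb{F}_p))=\delta_k+\sum_{I=1}^N\ \sum_{\substack{(k_1,\dots,k_I),\ k_i\mid m^-\\ \mathrm{lcm}(o(k_1),\dots,o(k_I))=k}}\binom{N}{I}\prod_{i=1}^I\varphi(k_i),$$ $$\#\mathrm{Per}_k(P_d^N,\mathbb{P}^N(\mathbb{F}_p))=\sum_{D=0}^N\Bigg(\delta_k+\sum_{I=1}^D\ \sum_{\substack{(k_1,\dots,k_I),\ k_i\mid m^-\\ \mathrm{lcm}(o(k_1),\dots,o(k_I))=k}}\binom{D}{I}\prod_{i=1}^I\varphi(k_i)\Bigg),$$ where $\varphi$ is Euler's totient function. Furthermore, $$\#\mathrm{Per}(P_d^N,\mathbb{A}^N(\mathbb{F}_p))=1+\sum_{I=1}^N\binom{N}{I}\sum_{\substack{(k_1,\dots,k_I)\\ k_i\mid m^-}}\prod_{i=1}^I\varphi(k_i)=(m^-+1)^N,$$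 $$\#\mathrm{Per}(P_d^N,\mathbb{P}^N(\mathbb{F}_p))=\sum_{D=0}^N\Bigg(1+\sum_{I=1}^D\binom{D}{I}\sum_{\substack{(k_1,\dots,k_I)\\ k_i\mid m^-}}\prod_{i=1}^I\varphi(k_i)\Bigg)=\sum_{D=0}^N(m^-+1)^D.$$
   Context: For a self-map $F$ of a finite set $S$, the minimal period of a periodic point $x$ is the least $n\ge1$ with $F^n(x)=x$; $\mathrm{Per}_k(F,S)$ is the set of points of $S$ of minimal period exactly $k$, and $\mathrm{Per}(F,S)=\bigcup_{k\ge1}\mathrm{Per}_k(F,S)$. Inner sums range over ordered $I$-tuples of positive divisors of $m^-$. *)

From HB Require Import structures.
From mathcomp Require Import boolp.
From mathcomp Require Import all_boot all_order all_algebra all_field.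
Set Implicit Arguments. Unset Strict Implicit. Unset Printing Implicit Defensive.
Import GRing.Theory.

Definition Per_k (T : finType) (F : T -> T) (S : {set T}) (k : nat) : {set T} :=
  [set x in S | [&& (0 < k)%N, iter k F x == x &
                   [forall j : 'I_k, (0 < j)%N ==> (iter j F x != x)]]].

Definition Per (T : finType) (F : T -> T) (S : {set T}) : {set T} :=
  [set x in S | `[< exists k : nat, (0 < k)%N /\ iter k F x = x >]].

Definition powmap (R : pzRingType) (n d : nat) (x : {ffun 'I_n -> R}) :
  {ffun 'I_n -> R} := [ffun i => (x i ^+ d)%R].

(* Projective N-space over a field K, modelled by normalized representatives:
   vectors of K^(N+1) whose first nonzero coordinate equals 1. *)
Definition normalized (K : fieldType) (n : nat) (x : {ffun 'I_n -> K}) : bool :=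
  [exists i : 'I_n, (x i == 1%R) && [forall j : 'I_n, (j < i)%N ==> (x j == 0%R)]].

Definition projN (K : finFieldType) (N : nat) : {set {ffun 'I_N.+1 -> K}} :=
  [set x | normalized x].

Definition mminus (p d : nat) : nat :=
  \max_(e < p | (e %| p.-1) && coprime e d) e.

(* multiplicative order of d modulo e, with o(1) = 1 (meaningful for coprime d e). *)
Definition ordmod (d e : nat) : nat :=
  if (e <= 1)%N then 1%N
  else find (fun k => (0 < k)%N && (d ^ k %% e == 1)) (iota 0 e.+1).

Definition delta (k : nat) : nat := (k == 1%N).

Definition tupsum_k (d m n k : nat) : nat :=
  \sum_(1 <= I < n.+1)
    \sum_(t : {ffun 'I_I -> 'I_m.+1} |
            [forall i, ((t i : nat) %| m)%N] &&
            (\big[lcmn/1%N]_(i < I) ordmod d (t i) == k))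
      'C(n, I) * \prod_(i < I) totient (t i).

Definition tupsum (m n : nat) : nat :=
  \sum_(1 <= I < n.+1)
    'C(n, I) * \sum_(t : {ffun 'I_I -> 'I_m.+1} | [forall i, ((t i : nat) %| m)%N])
                 \prod_(i < I) totient (t i).

From HB Require Import structures.
From mathcomp Require Import boolp.
From mathcomp Require Import all_boot all_order all_algebra all_field all_fingroup all_solvable.

(* The map y |-> y ^ d on F_p fixes 0, and an element u of the cyclic group
   F_p^* returns to itself after n steps iff #[u] divides d ^ n - 1, that is iff
   #[u] is coprime to d (equivalently #[u] divides m^-) and o(#[u]) divides n;
   each divisor e of p - 1 is the order of exactly phi(e) elements.  The minimal
   period of a point of A^N is the lcm of the periods of its coordinates, so
   sorting points by their set of nonzero coordinates gives the binomial sum over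
   tuples of divisors of m^- weighted by phi.  A normalized point of P^N is a
   block of zeros, a 1, and an arbitrary point of A^D for some D <= N.  Finally
   sum_(e | m^-) phi(e) = m^- turns the total counts into powers of m^- + 1. *)

Set Implicit Arguments.
Unset Strict Implicit.
Unset Printing Implicit Defensive.
Import GRing.Theory.

Lemma iter_expr (R : pzSemiRingType) d n (y : R) :
  iter n (fun z => z ^+ d)%R y = (y ^+ (d ^ n))%R.
Proof. by elim: n => [|n IHn]; rewrite ?expr1 // iterS IHn -exprM expnSr. Qed.

Lemma leq_totient n : totient n <= n.
Proof.
rewrite totient_count_coprime -[leqRHS]subn0 -[leqRHS]muln1 -sum_nat_const_nat.
by apply: leq_sum => i _; exact: leq_b1.
Qed.

Lemma ordmod_gt0 d e : 0 < ordmod d e.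
Proof. by rewrite /ordmod; case: ifP. Qed.

Lemma ordmod_spec d e : 1 < e -> coprime e d ->
  [/\ d ^ ordmod d e %% e = 1
    & forall k, 0 < k < ordmod d e -> d ^ k %% e != 1].
Proof.
move=> e_gt1 co_ed; pose a k := (0 < k) && (d ^ k %% e == 1).
have ordmodE : ordmod d e = find a (iota 0 e.+1) by rewrite /ordmod leqNgt e_gt1.
have has_a : has a (iota 0 e.+1).
  apply/hasP; exists (totient e); first by rewrite mem_iota ltnS leq_totient.
  rewrite /a totient_gt0 (ltnW e_gt1) /=.
  by rewrite Euler_exp_totient ?modn_small // coprime_sym.
have lt_ord : ordmod d e < e.+1.
  by rewrite ordmodE -[X in _ < X](size_iota 0 e.+1) -has_find.
have := nth_find 0 has_a; rewrite -ordmodE nth_iota // add0n => /andP[_ /eqP ->].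
split=> // k /andP[k_gt0 lt_k].
have := before_find 0 (a := a) (s := iota 0 e.+1) (i := k).
rewrite -ordmodE => /(_ lt_k); rewrite nth_iota ?(ltn_trans lt_k) // add0n /a k_gt0.
by move/negbT.
Qed.

Lemma expn_eq1_mod_ordmod d e n : 0 < e -> 0 < n ->
  (d ^ n == 1 %[mod e]) = coprime e d && (ordmod d e %| n).
Proof.
move=> e_gt0 n_gt0; have [e_gt1|e_le1] := ltnP 1 e; last first.
  have -> : e = 1 by apply/eqP; rewrite eqn_leq e_le1.
  by rewrite !modn1 coprime1n /ordmod leqnn dvd1n.
rewrite [1 %% e]modn_small //; case: (boolP (coprime e d)) => [co_ed|nco_ed] /=.
  have [o_mod o_min] := ordmod_spec e_gt1 co_ed.
  have reduce k : d ^ k %% e = d ^ (k %% ordmod d e) %% e.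
    rewrite {1}(divn_eq k (ordmod d e)) expnD (mulnC (k %/ _)) expnM -modnMm.
    by rewrite -(modnXm (k %/ _) e) o_mod exp1n (modn_small e_gt1) mul1n modn_mod.
  rewrite reduce; apply/eqP/idP => [to1|]; last first.
    by rewrite /dvdn => /eqP ->; rewrite expn0 modn_small.
  rewrite /dvdn; apply: contraT => nz; have := o_min (n %% ordmod d e).
  by rewrite lt0n nz ltn_mod ordmod_gt0 to1 => /(_ isT); rewrite eqxx.
apply: contraNF nco_ed => /eqP to1.
by rewrite -(coprime_pexpr _ _ n_gt0) -coprime_modr to1 coprimen1.
Qed.

Lemma mminus_spec q d : 1 < q ->
  mminus q d %| q.-1 /\ forall e, e %| q.-1 -> coprime e d = (e %| mminus q d).
Proof.
move=> q_gt1; have q1_gt0 : 0 < q.-1 by rewrite -ltnS prednK // ltnW.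
pose P (e : 'I_q) := (e %| q.-1) && coprime e d.
have P_1 : P (Ordinal q_gt1) by rewrite /P dvd1n coprime1n.
rewrite /mminus (bigmax_eq_arg _ P_1); case: arg_maxnP => // i /andP[i_dvd i_co] i_max.
split=> // e e_dvd; apply/idP/idP => [e_co|e_dvd_i]; last exact: coprime_dvdl i_co.
have l_dvd : lcmn e i %| q.-1 by rewrite dvdn_lcm e_dvd.
have l_co : coprime (lcmn e i) d.
  apply: (coprime_dvdl (n := e * i)); first by rewrite dvdn_lcm dvdn_mulr ?dvdn_mull.
  by rewrite coprimeMl e_co.
have l_lt_q : lcmn e i < q.
  by rewrite (leq_ltn_trans (dvdn_leq q1_gt0 l_dvd)) // prednK // ltnW.
have l_le_i : lcmn e i <= i by apply: (i_max (Ordinal l_lt_q)); rewrite /P l_dvd.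
have -> : (i : nat) = lcmn e i.
  by apply/eqP; rewrite eqn_leq l_le_i dvdn_leq ?dvdn_lcmr // (dvdn_gt0 q1_gt0 l_dvd).
exact: dvdn_lcml.
Qed.

Section CyclicPowerMap.
Variables (gT : finGroupType) (d : nat).

(* 0 marks a non-periodic point, so that [pow_period u %| n] fails for n > 0. *)
Definition pow_period (u : gT) : nat :=
  if coprime #[u]%g d then ordmod d #[u]%g else 0.

Lemma expg_expn_id (u : gT) n : 0 < n -> (u ^+ (d ^ n) == u)%g = (pow_period u %| n).
Proof.
move=> n_gt0; rewrite -{2}(expg1 u) eq_expg_mod_order.
rewrite expn_eq1_mod_ordmod ?order_gt0 // /pow_period.
by case: (coprime _ _); rewrite //= dvd0n eqn0Ngt n_gt0.
Qed.

Lemma card_order_cyclic e :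
  cyclic [set: gT] -> e %| #|gT| -> #|[pred u : gT | #[u]%g == e]| = totient e.
Proof.
move=> cyc e_dvd; have [a defT] := cyclicP cyc.
have oa : #[a]%g = #|gT| by rewrite /order -defT cardsT.
rewrite -oa in e_dvd.
pose b := (a ^+ (#[a] %/ e))%g.
have ob : #[b]%g = e.
  by rewrite orderXdiv ?dvdn_div // divnA // mulKn // order_gt0.
rewrite -{2}ob totient_gen; apply: eq_card => x; rewrite !inE /generator.
have := @eq_subG_cyclic gT [set: gT]%G <[b]>%G <[x]>%G cyc (subsetT _) (subsetT _).
by rewrite /= => ->; rewrite -/(order b) -/(order x) ob eq_sym.
Qed.

Lemma sum_pow_period m (H : nat -> nat) : cyclic [set: gT] -> m %| #|gT| ->
    (forall e, e %| #|gT| -> coprime e d = (e %| m)) -> H 0 = 0 ->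
  \sum_(u : gT) H (pow_period u) = \sum_(e < m.+1 | e %| m) totient e * H (ordmod d e).
Proof.
move=> cyc m_dvd co_m H0.
have m_gt0 : 0 < m by apply: dvdn_gt0 m_dvd; rewrite -cardsT cardG_gt0.
have lt_m e : e %| m -> e < m.+1 by move=> e_dvd; rewrite ltnS dvdn_leq.
have H_period u : H (pow_period u) = if #[u]%g %| m then H (ordmod d #[u]%g) else 0.
  by rewrite /pow_period co_m -?cardsT ?order_dvdG ?inE //; case: ifP.
rewrite (eq_bigr _ (fun u _ => H_period u)) -big_mkcond /=.
rewrite (partition_big (fun u => inord #[u]%g : 'I_m.+1) (fun e : 'I_m.+1 => e %| m)) /=;
  last by move=> u u_dvd; rewrite inordK ?lt_m.
apply: eq_bigr => e e_dvd.
rewrite (eq_bigl (fun u => #[u]%g == e)) => [|u]; last first.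
  apply/andP/eqP => [[u_dvd /eqP <-]|ou]; first by rewrite inordK ?lt_m.
  by split; [rewrite ou | apply/eqP/val_inj; rewrite /= inordK ou ?lt_m].
rewrite (eq_bigr (fun _ => H (ordmod d e))) => [|u /eqP -> //].
by rewrite sum_nat_const card_order_cyclic // (dvdn_trans e_dvd m_dvd).
Qed.
End CyclicPowerMap.

Section FieldPowerMap.
Variables (K : finFieldType) (d : nat).

Definition unit_of (y : K) : {unit K} := insubd (1%g : {unit K}) y.

Lemma val_unit_of y : y != 0%R -> val (unit_of y) = y.
Proof. by move=> y_nz; rewrite /unit_of val_insubd unitfE y_nz. Qed.

Definition period (y : K) : nat := if y == 0%R then 1 else pow_period d (unit_of y).

Lemma period0 : period 0%R = 1.
Proof. by rewrite /period eqxx. Qed.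

Lemma period1 : period 1%R = 1.
Proof.
rewrite /period oner_eq0.
have -> : unit_of 1%R = 1%g by apply: val_inj; rewrite val_unit_of ?oner_neq0.
by rewrite /pow_period order1 coprime1n /ordmod.
Qed.

Lemma iter_expr_id (y : K) n : 0 < d -> 0 < n ->
  (iter n (fun z => z ^+ d)%R y == y) = (period y %| n).
Proof.
move=> d_gt0 n_gt0; rewrite iter_expr /period.
have [->|y_nz] := eqVneq y 0%R.
  by rewrite expr0n expn_eq0 eqn0Ngt d_gt0 /= dvd1n eqxx.
set u := unit_of y; have <- : val u = y := val_unit_of y_nz.
by rewrite -FinRing.val_unitX val_eqE expg_expn_id.
Qed.

Lemma sum_period (H : nat -> nat) : H 0 = 0 ->
  \sum_(a : K | a != 0%R) H (period a) =
  \sum_(e < (mminus #|K| d).+1 | e %| mminus #|K| d) totient e * H (ordmod d e).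
Proof.
move=> H0; have [m_dvd co_m] := mminus_spec d (card_finNzRing_gt1 K).
have unit_nz (u : {unit K}) : val u != 0%R by rewrite -unitfE (valP u).
rewrite (reindex_onto (fun u : {unit K} => val u) unit_of) => [|a a_nz]; last first.
  exact: val_unit_of.
rewrite (eq_bigl xpredT) => [|u]; last by rewrite unit_nz /unit_of valKd eqxx.
under eq_bigr => u _ do rewrite /period (negbTE (unit_nz u)) /unit_of valKd.
have card_units := card_finField_unit K; rewrite cardsT in card_units.
apply: sum_pow_period; rewrite ?card_units //.
exact: field_unit_group_cyclic [set: _]%G.
Qed.
End FieldPowerMap.

Section FfunCons.
Variable A : Type.

Definition ffun_cons n (a : A) (x : {ffun 'I_n -> A}) : {ffun 'I_n.+1 -> A} :=
  [ffun i => if unlift ord0 i is Some j then x j else a].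

Lemma ffun_cons0 n a (x : {ffun 'I_n -> A}) : ffun_cons a x ord0 = a.
Proof. by rewrite ffunE unlift_none. Qed.

Lemma ffun_consS n a (x : {ffun 'I_n -> A}) j : ffun_cons a x (lift ord0 j) = x j.
Proof. by rewrite ffunE liftK. Qed.

Lemma forall_ffun_cons n a (x : {ffun 'I_n -> A}) (P : pred A) :
  [forall i, P (ffun_cons a x i)] = P a && [forall i, P (x i)].
Proof.
apply/forallP/andP => [Px|[Pa /forallP Px] i].
  split; first by have := Px ord0; rewrite ffun_cons0.
  by apply/forallP => j; have := Px (lift ord0 j); rewrite ffun_consS.
by case: (unliftP ord0 i) => [j ->|->]; rewrite ?ffun_cons0 ?ffun_consS.
Qed.

Lemma big_ffun_cons (R : Type) (idx : R) (op : Monoid.law idx) (f : A -> R) n a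
    (x : {ffun 'I_n -> A}) :
  \big[op/idx]_(i < n.+1) f (ffun_cons a x i) = op (f a) (\big[op/idx]_(i < n) f (x i)).
Proof.
by rewrite big_ord_recl ffun_cons0; congr (op _ _); apply: eq_bigr => j _; rewrite ffun_consS.
Qed.
End FfunCons.

Lemma sum_ffun_cons (A : finType) n (G : {ffun 'I_n.+1 -> A} -> nat) :
  \sum_x G x = \sum_(a : A) \sum_(x : {ffun 'I_n -> A}) G (ffun_cons a x).
Proof.
rewrite pair_bigA (reindex (fun ax : A * {ffun 'I_n -> A} => ffun_cons ax.1 ax.2)) //=.
exists (fun x : {ffun 'I_n.+1 -> A} => (x ord0, [ffun j => x (lift ord0 j)])).
  move=> [a x] _ /=; rewrite ffun_cons0; congr (_, _); apply/ffunP => j.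
  by rewrite ffunE ffun_consS.
move=> x _; apply/ffunP => i; rewrite ffunE.
by case: (unliftP ord0 i) => [j ->|->]; rewrite ?ffunE.
Qed.

Section LcmSums.
Variables (A : finType) (g : A -> nat).

Definition lcm_of n (x : {ffun 'I_n -> A}) : nat := \big[lcmn/1]_(i < n) g (x i).

Definition lcm_sum (P : pred A) (w : A -> nat) n (F : nat -> nat) : nat :=
  \sum_(x : {ffun 'I_n -> A} | [forall i, P (x i)]) F (lcm_of x) * \prod_(i < n) w (x i).

Lemma lcm_of_cons n a (x : {ffun 'I_n -> A}) : lcm_of (ffun_cons a x) = lcmn (g a) (lcm_of x).
Proof. exact: big_ffun_cons. Qed.

Lemma eq_lcm_sum P w n F1 F2 : F1 =1 F2 -> lcm_sum P w n F1 = lcm_sum P w n F2.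
Proof. by move=> eqF; apply: eq_bigr => x _; rewrite eqF. Qed.

Lemma lcm_sum0 P w F : lcm_sum P w 0 F = F 1.
Proof.
rewrite /lcm_sum (eq_bigl xpredT) => [|x]; last by apply/forallP => -[].
rewrite (eq_bigr (fun _ => F 1)) => [|x _]; last by rewrite /lcm_of !big_ord0 muln1.
by rewrite sum_nat_const card_ffun card_ord expn0 mul1n.
Qed.

Lemma lcm_sumS P w n F : lcm_sum P w n.+1 F =
  \sum_(a | P a) w a * lcm_sum P w n (fun q => F (lcmn (g a) q)).
Proof.
rewrite /lcm_sum big_mkcond sum_ffun_cons [RHS]big_mkcond; apply: eq_bigr => a _.
under eq_bigr => x _ do rewrite forall_ffun_cons.
case: (P a) => /=; last by rewrite big1.
rewrite big_distrr [RHS]big_mkcond; apply: eq_bigr => x _; case: [forall i, _] => //.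
by rewrite lcm_of_cons (big_ffun_cons muln) mulnCA.
Qed.

Lemma lcm_sumT n F : lcm_sum predT (fun=> 1) n F = \sum_(x : {ffun 'I_n -> A}) F (lcm_of x).
Proof.
rewrite /lcm_sum (eq_bigl xpredT) => [|x]; last by apply/forallP.
by apply: eq_bigr => x _; rewrite big1 ?muln1.
Qed.

Lemma lcm_sum_binomial (P : pred A) w a0 n F : P a0 -> g a0 = 1 -> w a0 = 1 ->
  lcm_sum P w n F = \sum_(0 <= I < n.+1) 'C(n, I) * lcm_sum (predD1 P a0) w I F.
Proof.
move=> Pa0 ga0 wa0; elim: n F => [|n IHn] F; first by rewrite big_nat1 !lcm_sum0 bin0 mul1n.
have lcm_sum_D1S I G : lcm_sum (predD1 P a0) w I.+1 G =
    \sum_(a | P a && (a != a0)) w a * lcm_sum (predD1 P a0) w I (fun q => G (lcmn (g a) q)).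
  by rewrite lcm_sumS; apply: eq_bigl => a; rewrite andbC.
rewrite lcm_sumS (bigD1 a0) //= wa0 ga0 mul1n (eq_lcm_sum _ _ _ (fun q => congr1 F (lcm1n q))).
under eq_bigr => a _ do rewrite IHn big_distrr.
rewrite exchange_big /= IHn.
under [X in _ + X]eq_bigr => I _ do rewrite (eq_bigr _ (fun a _ => mulnCA _ _ _)) -big_distrr -lcm_sum_D1S.
rewrite [RHS]big_nat_recl // [in RHS]bin0 mul1n.
(* Pascal's rule recombines the tuples with and without a0 in front. *)
under [in RHS]eq_bigr => I _ do rewrite binS mulnDl.
rewrite big_split /= big_nat_recl // bin0 mul1n -addnA; congr (_ + (_ + _)).
by rewrite big_nat_recr //= bin_small // mul0n addn0.
Qed.
End LcmSums.

Lemma lcm_sum_transfer (A B : finType) (gA : A -> nat) (gB : B -> nat)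
    (P : pred A) (Q : pred B) (wA : A -> nat) (wB : B -> nat) :
    (forall H : nat -> nat, H 0 = 0 ->
       \sum_(a | P a) wA a * H (gA a) = \sum_(b | Q b) wB b * H (gB b)) ->
  forall n F, F 0 = 0 -> lcm_sum gA P wA n F = lcm_sum gB Q wB n F.
Proof.
move=> step; elim=> [|n IHn] F F0; first by rewrite !lcm_sum0.
rewrite !lcm_sumS (eq_bigr (fun a => wA a * lcm_sum gB Q wB n (fun q => F (lcmn (gA a) q))));
  last by move=> a _; rewrite IHn // lcmn0.
apply: (step (fun r => lcm_sum gB Q wB n (fun q => F (lcmn r q)))).
by rewrite /lcm_sum big1 // => x _; rewrite lcm0n F0.
Qed.

Lemma normalized_cons (K : fieldType) n a (x : {ffun 'I_n -> K}) :
  normalized (ffun_cons a x) = (a == 1%R) || ((a == 0%R) && normalized x).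
Proof.
apply/existsP/idP => [[i /andP[xi1 /forallP lead0]]|].
  case: (unliftP ord0 i) xi1 lead0 => [j ->|->] xi1 lead0; last by rewrite -(ffun_cons0 a x) xi1.
  have a0 : a == 0%R by have := lead0 ord0; rewrite lift0 /= ffun_cons0.
  rewrite a0 /=; apply/orP; right; apply/existsP; exists j.
  rewrite -(ffun_consS a x) xi1 /=; apply/forallP => k; apply/implyP => kj.
  by have := lead0 (lift ord0 k); rewrite !lift0 ltnS kj ffun_consS.
case/orP => [a1|/andP[a0 /existsP[j /andP[xj1 /forallP lead0]]]].
  by exists ord0; rewrite ffun_cons0 a1; apply/forallP.
exists (lift ord0 j); rewrite ffun_consS xj1 /=; apply/forallP => k; apply/implyP.
case: (unliftP ord0 k) => [k' ->|->]; last by rewrite ffun_cons0.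
by rewrite !lift0 ltnS ffun_consS => kj; have := lead0 k'; rewrite kj.
Qed.

Lemma sum_normalized (K : finFieldType) (g : K -> nat) n F :
    g 0%R = 1 -> g 1%R = 1 ->
  \sum_(x : {ffun 'I_n -> K} | normalized x) F (lcm_of g x) =
  \sum_(0 <= D < n) \sum_(x : {ffun 'I_D -> K}) F (lcm_of g x).
Proof.
move=> g0 g1; elim: n => [|n IHn].
  by rewrite big_geq // big_pred0 // => x; apply/existsP => -[[]].
rewrite big_mkcond sum_ffun_cons (bigD1 1%R) //= (bigD1 0%R) ?(eq_sym 0%R) ?oner_neq0 //=.
rewrite [X in _ + (_ + X)]big1 ?addn0 => [|a /andP[a_ne1 a_ne0]]; last first.
  by apply: big1 => x _; rewrite normalized_cons (negbTE a_ne1) (negbTE a_ne0).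
rewrite big_nat_recr //= [RHS]addnC; congr (_ + _).
  by apply: eq_bigr => x _; rewrite normalized_cons eqxx lcm_of_cons g1 lcm1n.
rewrite -IHn [RHS]big_mkcond; apply: eq_bigr => x _.
by rewrite normalized_cons eqxx eq_sym oner_eq0 /= lcm_of_cons g0 lcm1n.
Qed.

Section PeriodicPoints.
Variables (T : finType) (f : T -> T) (L : T -> nat).
Hypothesis iter_idP : forall x n, 0 < n -> (iter n f x == x) = (L x %| n).

Lemma Per_kE S k : 0 < k -> Per_k f S k = [set x in S | L x == k].
Proof.
move=> k_gt0; apply/setP => x; rewrite !inE; case: (x \in S) => //=.
rewrite k_gt0 iter_idP //=; apply/andP/eqP => [[Lx_dvd /forallP not_per]|<-]; last first.
  split=> //; apply/forallP => j; apply/implyP => j_gt0.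
  by rewrite iter_idP // gtnNdvd.
have Lx_gt0 : 0 < L x by apply: dvdn_gt0 Lx_dvd.
case: ltngtP (dvdn_leq k_gt0 Lx_dvd) => // Lx_lt_k _.
by have := not_per (Ordinal Lx_lt_k); rewrite /= Lx_gt0 iter_idP // dvdnn.
Qed.

Lemma PerE S : Per f S = [set x in S | 0 < L x].
Proof.
apply/setP => x; rewrite !inE; case: (x \in S) => //=.
apply/asboolP/idP => [[k [k_gt0 /eqP]]|Lx_gt0]; last first.
  by exists (L x); split=> //; apply/eqP; rewrite iter_idP.
by rewrite iter_idP //; apply: dvdn_gt0.
Qed.
End PeriodicPoints.

Lemma iter_powmap (R : pzRingType) n d k (x : {ffun 'I_n -> R}) :
  iter k (powmap d) x = [ffun i => iter k (fun z => z ^+ d)%R (x i)].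
Proof.
elim: k => [|k IHk]; first by apply/ffunP => i; rewrite ffunE.
by rewrite iterS IHk; apply/ffunP => i; rewrite !ffunE.
Qed.

Lemma iter_powmap_id (K : finFieldType) n d : 0 < d ->
  forall (x : {ffun 'I_n -> K}) k, 0 < k ->
  (iter k (powmap d) x == x) = (lcm_of (period d) x %| k).
Proof.
move=> d_gt0 x k k_gt0; rewrite iter_powmap; apply/eqP/dvdn_biglcmP => [iter_id i _|per_dvd].
  by rewrite -iter_expr_id // -{2}(iter_id) ffunE.
by apply/ffunP => i; rewrite ffunE; apply/eqP; rewrite iter_expr_id // per_dvd.
Qed.

Lemma card_setIdE (T : finType) (S : {set T}) (P : pred T) :
  #|[set x in S | P x]| = \sum_(x in S) P x.
Proof.
rewrite -sum1dep_card big_mkcondr /=; apply: eq_bigr => x _.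
by case: (P x).
Qed.

Lemma sum_prod_totient m n :
  \sum_(t : {ffun 'I_n -> 'I_m.+1} | [forall i, t i %| m]) \prod_(i < n) totient (t i) = m ^ n.
Proof.
have : \prod_(i < n) \sum_(e < m.+1 | e %| m) totient e = m ^ n.
  by rewrite (eq_bigr (fun _ => m)) ?prod_nat_const ?card_ord // => i _; exact: sum_totient_dvd.
rewrite bigA_distr_big => <-; apply: eq_bigl => t.
by apply/forallP/ffun_onP => t_dvd i; have := t_dvd i.
Qed.

Lemma tupsum_pow m n : 1 + tupsum m n = m.+1 ^ n.
Proof.
rewrite /tupsum; under eq_bigr => I _ do rewrite sum_prod_totient.
rewrite -(add1n m) expnDn -(big_mkord xpredT (fun i => 'C(n, i) * (1 ^ (n - i) * m ^ i))).
rewrite [RHS]big_nat_recl // bin0 exp1n expn0 !mul1n big_add1 /=; congr (_ + _).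
by apply: eq_bigr => i _; rewrite exp1n mul1n.
Qed.

Section Counting.
Variables (K : finFieldType) (d : nat).
Hypothesis d_gt0 : 0 < d.
Let m := mminus #|K| d.

Lemma sum_lcm_period n F : F 0 = 0 ->
  \sum_(x : {ffun 'I_n -> K}) F (lcm_of (period d) x) =
  F 1 + \sum_(1 <= I < n.+1)
          'C(n, I) * lcm_sum (fun e : 'I_m.+1 => ordmod d e) (fun e => e %| m) totient I F.
Proof.
move=> F0; rewrite -lcm_sumT (lcm_sum_binomial _ _ (a0 := 0%R)) ?period0 //.
rewrite big_nat_recl // bin0 mul1n lcm_sum0 big_add1 /=; congr (_ + _).
apply: eq_bigr => I _; congr (_ * _); apply: lcm_sum_transfer => // H H0.
by rewrite -sum_period //; apply: eq_big => [a|a _]; rewrite /= ?andbT ?mul1n.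
Qed.

Lemma sum_lcm_period_eq n k : 0 < k ->
  \sum_(x : {ffun 'I_n -> K}) (lcm_of (period d) x == k) = delta k + tupsum_k d m n k.
Proof.
move=> k_gt0; rewrite (@sum_lcm_period _ (fun q => nat_of_bool (q == k))); last by case: k k_gt0.
rewrite /delta eq_sym; congr (_ + _); apply: eq_bigr => I _.
rewrite /lcm_sum big_distrr [RHS]big_mkcondr /=; apply: eq_bigr => t _.
by rewrite /lcm_of; case: (_ == k); rewrite ?mul0n ?muln0 ?mul1n.
Qed.

Lemma sum_lcm_period_gt0 n :
  \sum_(x : {ffun 'I_n -> K}) (0 < lcm_of (period d) x) = 1 + tupsum m n.
Proof.
rewrite (@sum_lcm_period _ (fun q => nat_of_bool (0 < q))) //; congr (_ + _).
apply: eq_bigr => I _; congr (_ * _); apply: eq_bigr => t _.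
suff -> : 0 < lcm_of (fun e : 'I_m.+1 => ordmod d e) t by rewrite mul1n.
apply: (big_ind (fun q => 0 < q)) => // [q r q_gt0 r_gt0|i _]; last exact: ordmod_gt0.
by rewrite lcmn_gt0 q_gt0.
Qed.

Lemma card_Per_k_affine n k : 0 < k ->
  #|Per_k (powmap d) [set: {ffun 'I_n -> K}] k| = delta k + tupsum_k d m n k.
Proof.
move=> k_gt0; rewrite (Per_kE (iter_powmap_id d_gt0)) // card_setIdE -sum_lcm_period_eq //.
by apply: eq_bigl => x; rewrite inE.
Qed.

Lemma card_Per_affine n :
  #|Per (powmap d) [set: {ffun 'I_n -> K}]| = 1 + tupsum m n.
Proof.
rewrite (PerE (iter_powmap_id d_gt0)) card_setIdE -sum_lcm_period_gt0.
by apply: eq_bigl => x; rewrite inE.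
Qed.

Lemma card_Per_k_proj n k : 0 < k ->
  #|Per_k (powmap d) (projN K n) k| = \sum_(0 <= D < n.+1) (delta k + tupsum_k d m D k).
Proof.
move=> k_gt0; rewrite (Per_kE (iter_powmap_id d_gt0)) // card_setIdE.
rewrite (eq_bigl (fun x => normalized x)) => [|x]; last by rewrite inE.
rewrite (@sum_normalized _ _ _ (fun q => nat_of_bool (q == k))) ?period0 ?period1 //.
by apply: eq_bigr => D _; rewrite sum_lcm_period_eq.
Qed.

Lemma card_Per_proj n :
  #|Per (powmap d) (projN K n)| = \sum_(0 <= D < n.+1) (1 + tupsum m D).
Proof.
rewrite (PerE (iter_powmap_id d_gt0)) card_setIdE.
rewrite (eq_bigl (fun x => normalized x)) => [|x]; last by rewrite inE.
rewrite (@sum_normalized _ _ _ (fun q => nat_of_bool (0 < q))) ?period0 ?period1 //.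
by apply: eq_bigr => D _; rewrite sum_lcm_period_gt0.
Qed.
End Counting.

Theorem mainTheorem3 (p d N : nat) (hp : prime p) (hd : (1 < d)%N) (hN : (1 <= N)%N) :
  let m := mminus p d in
  (forall k : nat, (0 < k)%N ->
     #|Per_k (@powmap 'F_p N d) [set: {ffun 'I_N -> 'F_p}] k|
       = (delta k + tupsum_k d m N k)%N
  /\ #|Per_k (@powmap 'F_p N.+1 d) (projN 'F_p N) k|
       = (\sum_(0 <= D < N.+1) (delta k + tupsum_k d m D k))%N)
  /\ #|Per (@powmap 'F_p N d) [set: {ffun 'I_N -> 'F_p}]| = (1 + tupsum m N)%N
  /\ (1 + tupsum m N)%N = (m.+1 ^ N)%N
  /\ #|Per (@powmap 'F_p N.+1 d) (projN 'F_p N)|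
       = (\sum_(0 <= D < N.+1) (1 + tupsum m D))%N
  /\ (\sum_(0 <= D < N.+1) (1 + tupsum m D))%N = (\sum_(0 <= D < N.+1) m.+1 ^ D)%N.
Proof.
move=> m; have d_gt0 : 0 < d := ltnW hd.
have mE : mminus #|'F_p| d = m by rewrite card_Fp.
split; [move=> k k_gt0; split|].
- by rewrite card_Per_k_affine // mE.
- by rewrite card_Per_k_proj // mE.
rewrite card_Per_affine // card_Per_proj // mE tupsum_pow; do !split.
by apply: eq_bigr => D _; rewrite tupsum_pow.
Qed.
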